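(* Let $\mathcal{X}\subseteq\mathbb{R}^d$ be nonempty, closed and convex, let $f:\mathbb{R}^d\to\mathbb{R}$ be convex, and let $\mathcal{X}_\star:=\operatorname{arg\,min}_{x\in\mathcal{X}}f(x)$. Let $x_k\in\mathcal{X}$ and $x_\star\in\mathcal{X}_\star$. Assume $g_k\in\partial f(x_k)$, $0\notin\partial f(x_k)$, and $0<t_k\le\frac{\langle g_k,x_k-x_\star\rangle}{\|g_k\|}$. Let $x_{k+1}\in\operatorname{arg\,min}_{z\in\mathcal{X}\cap\mathcal{B}(x_k,t_k)}\langle g_k,z\rangle$. Then $\|x_k-x_\star\|\ge t_k$, $\|x_{k+1}-x_k\|=t_k$, and $\|x_{k+1}-x_\star\|^2\le\|x_k-x_\star\|^2-t_k^2$.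
   Context: $\partial f(x)$ is the convex subdifferential. $\|\cdot\|$ is the Euclidean norm, $\mathcal{B}(x,t):=\{y:\|y-x\|\le t\}$. *)

From HB Require Import structures.
From mathcomp Require Import all_boot all_order all_algebra.
From mathcomp Require Import all_classical all_reals all_analysis.
Set Implicit Arguments. Unset Strict Implicit. Unset Printing Implicit Defensive.
Import Order.TTheory GRing.Theory Num.Theory.
Import numFieldNormedType.Exports.
Local Open Scope classical_set_scope.
Local Open Scope ring_scope.

Definition dotp {R : realType} {d : nat} (u v : 'rV[R]_d) : R :=
  \sum_(i < d) u 0 i * v 0 i.
Definition enorm {R : realType} {d : nat} (u : 'rV[R]_d) : R :=
  Num.sqrt (dotp u u).

Definition eball {R : realType} {d : nat} (x : 'rV[R]_d) (t : R) : set 'rV[R]_d :=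
  [set y | enorm (y - x) <= t].

Definition convex_fun {R : realType} {d : nat} (f : 'rV[R]_d -> R) : Prop :=
  forall x y (l : R), 0 <= l <= 1 ->
    f (l *: x + (1 - l) *: y) <= l * f x + (1 - l) * f y.

Definition subdiff {R : realType} {d : nat} (f : 'rV[R]_d -> R) (x : 'rV[R]_d)
  : set 'rV[R]_d :=
  [set g | forall y, f x + dotp g (y - x) <= f y].

Definition argmin_on {R : realType} {d : nat} (phi : 'rV[R]_d -> R)
  (A : set 'rV[R]_d) : set 'rV[R]_d :=
  [set x | A x /\ forall y, A y -> phi x <= phi y].

From HB Require Import structures.
From mathcomp Require Import all_boot all_order all_algebra.
From mathcomp Require Import all_classical all_reals all_analysis.
From mathcomp Require Import ring lra.
Import Order.TTheory GRing.Theory Num.Theory.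
Import numFieldNormedType.Exports.
Local Open Scope classical_set_scope.
Local Open Scope ring_scope.

(* Write a := x_{k+1} - x_k, v := x_* - x_{k+1} and G := |g_k|.  If the ball
   constraint were slack (|a| < t_k) or the angle at x_{k+1} obtuse
   (<a, v> < 0), a short step from x_{k+1} towards x_* would stay in
   X /\ B(x_k, t_k), so minimality of x_{k+1} would give <g_k, v> >= 0 and
     t_k G <= <g_k, x_k - x_*> = <g_k, -a> - <g_k, v> <= G |a| <= t_k G.
   Then |a| = t_k, <g_k, v> = 0 and Cauchy-Schwarz is tight, so -a is parallel
   to g_k and <a, v> = 0: neither alternative can happen.  Hence |a| = t_k,
   <a, v> >= 0 and |x_k - x_*|^2 = |a + v|^2 >= t_k^2 + |v|^2. *)

Lemma quadratic_small_step {R : realFieldType} {e p q : R} :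
  0 <= e -> 0 <= q -> 0 < e \/ p < 0 ->
  exists2 s, 0 < s <= 1 & s * (2 * p + s * q) <= e.
Proof.
move=> e0 q0 [e_gt0 | p_lt0].
  have p_le := ler_norm p; have p_ge0 := normr_ge0 p.
  have D_gt0 : 0 < e + 2 * `|p| + q by lra.
  set s := e / (e + 2 * `|p| + q).
  have s_def : s * (e + 2 * `|p| + q) = e by rewrite mulfVK ?gt_eqF.
  have s01 : 0 < s <= 1 by rewrite divr_gt0 // ler_pdivrMr // mul1r; lra.
  exists s => //; have : s * (2 * p + s * q) <= s * (2 * `|p| + q).
    by rewrite ler_pM2l //; nra.
  nra.
have D_gt0 : 0 < q - p by lra.
set s := - p / (q - p).
have s_def : s * (q - p) = - p by rewrite mulfVK ?gt_eqF.
have s01 : 0 < s <= 1.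
  by rewrite divr_gt0 ?oppr_gt0 // ler_pdivrMr // mul1r; lra.
by exists s => //; nra.
Qed.

Section EuclideanGeometry.
Context {R : realType} {d : nat}.
Implicit Types (u v w x y z : 'rV[R]_d).

Lemma dotpC u v : dotp u v = dotp v u.
Proof. by apply: eq_bigr => i _; rewrite mulrC. Qed.

Lemma dotpDl u v w : dotp (u + v) w = dotp u w + dotp v w.
Proof.
by rewrite /dotp -big_split; apply: eq_bigr => i _; rewrite !mxE mulrDl.
Qed.

Lemma dotpZl (a : R) u v : dotp (a *: u) v = a * dotp u v.
Proof.
by rewrite /dotp mulr_sumr; apply: eq_bigr => i _; rewrite !mxE mulrA.
Qed.

Lemma dotpNl u v : dotp (- u) v = - dotp u v.
Proof. by rewrite -scaleN1r dotpZl mulN1r. Qed.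

Lemma dotpBl u v w : dotp (u - v) w = dotp u w - dotp v w.
Proof. by rewrite dotpDl dotpNl. Qed.

Lemma dotpDr u v w : dotp w (u + v) = dotp w u + dotp w v.
Proof. by rewrite dotpC dotpDl !(dotpC w). Qed.

Lemma dotpZr (a : R) u v : dotp v (a *: u) = a * dotp v u.
Proof. by rewrite dotpC dotpZl dotpC. Qed.

Lemma dotpNr u v : dotp v (- u) = - dotp v u.
Proof. by rewrite dotpC dotpNl dotpC. Qed.

Lemma dotpBr u v w : dotp w (u - v) = dotp w u - dotp w v.
Proof. by rewrite dotpDr dotpNr. Qed.

Lemma dotp0l u : dotp 0 u = 0.
Proof. by rewrite -(scale0r 0) dotpZl mul0r. Qed.

Lemma dotpp_ge0 u : 0 <= dotp u u.
Proof. by apply: sumr_ge0 => i _; rewrite -expr2 sqr_ge0. Qed.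

Lemma dotpp_eq0 u : (dotp u u == 0) = (u == 0).
Proof.
apply/eqP/eqP => [uu0|->]; last exact: dotp0l.
apply/rowP => i; rewrite mxE; apply/eqP; rewrite -sqrf_eq0 expr2; apply/eqP.
by apply: (psumr_eq0P _ uu0) => // j _; rewrite -expr2 sqr_ge0.
Qed.

Lemma enorm_ge0 u : 0 <= enorm u.
Proof. exact: sqrtr_ge0. Qed.

Lemma enorm_sqr u : enorm u ^+ 2 = dotp u u.
Proof. by rewrite sqr_sqrtr // dotpp_ge0. Qed.

Lemma enorm_eq0 u : (enorm u == 0) = (u == 0).
Proof. by rewrite -sqrf_eq0 enorm_sqr dotpp_eq0. Qed.

Lemma enormN u : enorm (- u) = enorm u.
Proof. by rewrite /enorm dotpNl dotpNr opprK. Qed.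

Lemma enorm_sqrD u v :
  enorm (u + v) ^+ 2 = enorm u ^+ 2 + 2 * dotp u v + enorm v ^+ 2.
Proof. by rewrite !enorm_sqr dotpDl !dotpDr (dotpC v u); ring. Qed.

Lemma enorm_sqrZ (a : R) u : enorm (a *: u) ^+ 2 = a ^+ 2 * enorm u ^+ 2.
Proof. by rewrite !enorm_sqr dotpZl dotpZr mulrA -expr2. Qed.

Lemma enorm_le_sqr u (t : R) :
  0 <= t -> (enorm u <= t) = (enorm u ^+ 2 <= t ^+ 2).
Proof. by move=> t0; rewrite ler_sqr // nnegrE enorm_ge0. Qed.

Lemma cauchy_schwarz_defect u v :
  enorm (enorm v *: u - enorm u *: v) ^+ 2 =
  2 * (enorm u * enorm v) * (enorm u * enorm v - dotp u v).
Proof.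
rewrite enorm_sqr dotpBl !dotpBr !dotpZl !dotpZr (dotpC v u) -!enorm_sqr; ring.
Qed.

Lemma cauchy_schwarz u v : dotp u v <= enorm u * enorm v.
Proof.
have [uv0|uv_gt0] := eqVneq (enorm u * enorm v) 0.
  have : (u == 0) || (v == 0) by rewrite -!enorm_eq0 -mulf_eq0 uv0.
  by rewrite uv0 => /orP[] /eqP->; rewrite ?dotp0l // dotpC dotp0l.
have {}uv_gt0 : 0 < enorm u * enorm v.
  by rewrite lt_def uv_gt0 mulr_ge0 ?enorm_ge0.
have uv2_gt0 : 0 < 2 * (enorm u * enorm v) by rewrite mulr_gt0.
by rewrite -subr_ge0 -(pmulr_rge0 _ uv2_gt0) -cauchy_schwarz_defect sqr_ge0.
Qed.

Lemma cauchy_schwarz_eq {u v} :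
  dotp u v = enorm u * enorm v -> enorm v *: u = enorm u *: v.
Proof.
move=> uv; apply/eqP; rewrite -subr_eq0 -enorm_eq0 -sqrf_eq0.
by rewrite cauchy_schwarz_defect uv subrr mulr0.
Qed.

Lemma convex_set_segment (X : set 'rV[R]_d) y z (s : R) :
  convex_set X -> X y -> X z -> 0 <= s <= 1 -> X (y + s *: (z - y)).
Proof.
move=> cX Xy Xz /andP[s0 s1].
have : X (s *: z + (1 - s) *: y).
  by have := cX z y (Itv01 s0 s1); rewrite !inE; apply.
by congr X; rewrite scalerBl scale1r scalerBr addrCA addrC.
Qed.

Lemma segment_meets_ball {x y z} {t : R} :
  enorm (y - x) <= t -> enorm (y - x) < t \/ dotp (y - x) (z - y) < 0 ->
  exists2 s, 0 < s <= 1 & eball x t (y + s *: (z - y)).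
Proof.
move=> yx_le slack; have t0 : 0 <= t := le_trans (enorm_ge0 _) yx_le.
have e0 : 0 <= t ^+ 2 - enorm (y - x) ^+ 2.
  by rewrite subr_ge0 -enorm_le_sqr.
have e_gt0 : 0 < t ^+ 2 - enorm (y - x) ^+ 2 \/ dotp (y - x) (z - y) < 0.
  case: slack => [yx_lt|]; [left | by right].
  by rewrite subr_gt0 ltr_pXn2r ?nnegrE ?enorm_ge0.
have [s s01 hs] := quadratic_small_step e0 (sqr_ge0 (enorm (z - y))) e_gt0.
exists s => //; rewrite /eball /= addrAC enorm_le_sqr //.
by rewrite enorm_sqrD dotpZr enorm_sqrZ; lra.
Qed.

Lemma argmin_dotp_segment {g : 'rV[R]_d} {C : set 'rV[R]_d} {y z} {s : R} :
  argmin_on (dotp g) C y -> 0 < s -> C (y + s *: (z - y)) ->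
  0 <= dotp g (z - y).
Proof.
move=> [_ y_min] s_gt0 /y_min.
by rewrite dotpDr dotpZr lerDl pmulr_rge0.
Qed.

End EuclideanGeometry.

Section LinearizedStep.
Context {R : realType} {d : nat}.
Variables (X : set 'rV[R]_d) (g x xs y : 'rV[R]_d) (t : R).
Hypotheses (convX : convex_set X) (Xxs : X xs) (g_gt0 : 0 < enorm g)
  (t_le : t * enorm g <= dotp g (x - xs))
  (y_min : argmin_on (dotp g) (X `&` eball x t) y).

Lemma step_le_dist : t <= enorm (x - xs).
Proof.
by rewrite -(ler_pM2r g_gt0) (le_trans t_le) // mulrC cauchy_schwarz.
Qed.

Lemma dotp_opt_ge0_of_slack :
  enorm (y - x) < t \/ dotp (y - x) (xs - y) < 0 -> 0 <= dotp g (xs - y).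
Proof.
case: y_min => -[Xy yx_le] _ slack.
have [s /andP[s_gt0 s_le1] in_ball] := segment_meets_ball yx_le slack.
apply: (argmin_dotp_segment y_min s_gt0); split => //.
by apply: convex_set_segment => //; rewrite ltW.
Qed.

Lemma tight_step_of_dotp_opt_ge0 :
  0 <= dotp g (xs - y) -> enorm (y - x) = t /\ dotp (y - x) (xs - y) = 0.
Proof.
move=> gv_ge0; case: y_min => -[_ yx_le] _.
set a : 'rV[R]_d := y - x in yx_le *; set v : 'rV[R]_d := xs - y in gv_ge0 *.
have chain : t * enorm g + dotp g v <= dotp g (- a).
  have -> : - a = (x - xs) + v by rewrite /a /v addrA subrK opprB.
  by rewrite dotpDr lerD2r.
have cs := cauchy_schwarz g (- a); rewrite enormN in cs.
have a_eq : enorm a = t.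
  by apply/le_anti; rewrite yx_le -(ler_pM2r g_gt0) /=; lra.
rewrite a_eq in cs; have gv0 : dotp g v = 0 by lra.
have tight : dotp g (- a) = enorm g * enorm (- a) by rewrite enormN a_eq; lra.
split => //; have /(congr1 (dotp^~ v)) := cauchy_schwarz_eq tight.
rewrite /= !dotpZl dotpNl gv0 mulr0 => /esym /eqP.
by rewrite mulf_eq0 oppr_eq0 gt_eqF //= => /eqP.
Qed.

Lemma step_length : enorm (y - x) = t.
Proof.
case: y_min => -[_ yx_le] _; apply/le_anti; rewrite yx_le leNgt /=.
apply/negP => yx_lt.
have [yx_eq _] :=
  tight_step_of_dotp_opt_ge0 (dotp_opt_ge0_of_slack (or_introl yx_lt)).
by rewrite yx_eq ltxx in yx_lt.
Qed.

Lemma step_dotp_opt_ge0 : 0 <= dotp (y - x) (xs - y).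
Proof.
rewrite leNgt; apply/negP => obtuse.
have [_ av0] :=
  tight_step_of_dotp_opt_ge0 (dotp_opt_ge0_of_slack (or_intror obtuse)).
by rewrite av0 ltxx in obtuse.
Qed.

Lemma dist_sqr_decrease : enorm (y - xs) ^+ 2 <= enorm (x - xs) ^+ 2 - t ^+ 2.
Proof.
have -> : x - xs = - ((y - x) + (xs - y)) by rewrite opprD !opprB addrA subrK.
rewrite -opprB !enormN enorm_sqrD step_length.
by have := step_dotp_opt_ge0; lra.
Qed.

End LinearizedStep.

Theorem proposition7 (R : realType) (d : nat) (X : set 'rV[R]_d)
  (f : 'rV[R]_d -> R) (xk xstar gk xk1 : 'rV[R]_d) (tk : R) :
  X !=set0 -> closed X -> convex_set X -> convex_fun f ->
  X xk -> argmin_on f X xstar ->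
  subdiff f xk gk -> ~ subdiff f xk 0 ->
  0 < tk -> tk <= dotp gk (xk - xstar) / enorm gk ->
  argmin_on (dotp gk) (X `&` eball xk tk) xk1 ->
  [/\ enorm (xk - xstar) >= tk,
      enorm (xk1 - xk) = tk &
      enorm (xk1 - xstar) ^+ 2 <= enorm (xk - xstar) ^+ 2 - tk ^+ 2].
Proof.
move=> _ _ convX _ _ [Xxstar _] _ _ tk_gt0 tk_le xk1_min.
have gk_gt0 : 0 < enorm gk.
  rewrite lt_def enorm_ge0 andbT; apply/eqP => gk0.
  by move: tk_le; rewrite gk0 invr0 mulr0; lra.
have tk_leM : tk * enorm gk <= dotp gk (xk - xstar) by rewrite -ler_pdivlMr.
split.
- exact: step_le_dist gk_gt0 tk_leM.
- exact: step_length convX Xxstar gk_gt0 tk_leM xk1_min.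
- exact: dist_sqr_decrease convX Xxstar gk_gt0 tk_leM xk1_min.
Qed.
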